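(* Let $p$ be a prime and $G$ a $p$-group of order $p^m$ with $|G/Z(G)|=p^3$. (1) If $G$ has no abelian maximal subgroup, then $$A_G(t)=\frac{1}{p^m}\left(\frac{p^{m-3}}{1-p^mt}+\frac{p^m-p^{m-3}}{1-p^{m-2}t}\right).$$ (2) If $G$ possesses an abelian maximal subgroup, then $$A_G(t)=\frac{1}{p^m}\left(\frac{p^{m-3}}{1-p^mt}+\frac{p^{m-1}-p^{m-3}}{1-p^{m-1}t}+\frac{p^m-p^{m-1}}{1-p^{m-2}t}\right).$$
   Context: For a finite group $G$ and $n\ge0$, let $\alpha_{G,n}$ be the number of orbits of $G$ acting on $G^n$ by simultaneous conjugation, and $A_G(t)=\sum_{n\ge0}\alpha_{G,n}t^n$, viewed as a rational function of $t$. *)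

From HB Require Import structures.
From mathcomp Require Import all_boot all_order all_algebra all_fingroup all_solvable.
Set Implicit Arguments. Unset Strict Implicit. Unset Printing Implicit Defensive.

Definition tuples_in (gT : finGroupType) (G : {set gT}) (n : nat)
  : {set {ffun 'I_n -> gT}} :=
  [set f : {ffun 'I_n -> gT} | [forall i, f i \in G]].

Definition conj_tuple (gT : finGroupType) (n : nat) (f : {ffun 'I_n -> gT}) (g : gT)
  : {ffun 'I_n -> gT} := [ffun i => ((f i) ^ g)%g].

Definition sconj_orbit (gT : finGroupType) (G : {set gT}) (n : nat)
  (f : {ffun 'I_n -> gT}) : {set {ffun 'I_n -> gT}} :=
  [set conj_tuple f g | g in G].

Definition alpha (gT : finGroupType) (G : {set gT}) (n : nat) : nat :=
  #|[set sconj_orbit G f | f in tuples_in G n]|.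

From HB Require Import structures.
From mathcomp Require Import all_boot all_order all_algebra all_fingroup all_solvable.
From mathcomp Require Import zify.
Import GRing.Theory Num.Theory.

(* Burnside's lemma gives alpha_{G,n} |G| = sum_{g in G} |C_G(g)|^n, the tuples
   fixed by g being those of C_G(g)^n, so everything reduces to the orders of
   centralizers.  For g outside Z(G) we have Z(G) < C_G(g) < G, hence
   |C_G(g)| is p^(m-2) or p^(m-1).  In the second case C_G(g) is maximal, and
   abelian because Z(C_G(g)) contains Z(G) and g, hence has index at most p.
   Conversely, if M is an abelian maximal subgroup then C_G(g) = M for
   g in M \ Z(G), while for g outside M every element of M /\ C_G(g) centralizes
   <M, g> = G, so |C_G(g)| <= |G| |Z(G)| / |M| = p^(m-2). *)

Set Implicit Arguments.
Unset Strict Implicit.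
Unset Printing Implicit Defensive.

Section SimultaneousConjugation.
Local Open Scope group_scope.
Variables (gT : finGroupType) (n : nat).

Lemma conj_tuple1 (f : {ffun 'I_n -> gT}) : conj_tuple f 1 = f.
Proof. by apply/ffunP => i; rewrite ffunE conjg1. Qed.

Lemma conj_tupleM (f : {ffun 'I_n -> gT}) a b :
  conj_tuple f (a * b) = conj_tuple (conj_tuple f a) b.
Proof. by apply/ffunP => i; rewrite !ffunE conjgM. Qed.

Definition conj_tuple_action := TotalAction conj_tuple1 conj_tupleM.

Lemma acts_conj_tuple (G : {group gT}) :
  [acts G, on tuples_in G n | conj_tuple_action].
Proof.
apply/subsetP => a Ga; apply/astabsP => f; rewrite !inE /=.
by apply/forallP/forallP => Gf i; have := Gf i; rewrite ffunE groupJr.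
Qed.

Lemma card_fix_conj_tuple (G : {group gT}) g :
  #|'Fix_(tuples_in G n | conj_tuple_action)[g]| = (#|'C_G[g]| ^ n)%N.
Proof.
rewrite -[n in (_ ^ n)%N]card_ord -card_ffun_on; apply: eq_card => f.
rewrite !inE sub1set inE /=; apply/andP/forallP => [[/forallP Gf /eqP fixf] i|Cf].
  rewrite inE Gf; apply/cent1P/commgP/conjg_fixP.
  by move/ffunP: fixf => /(_ i); rewrite ffunE.
split; first by apply/forallP => i; have /setIP[] := Cf i.
apply/eqP/ffunP => i; rewrite ffunE.
by have /setIP[_ /cent1P/commgP/conjg_fixP] := Cf i.
Qed.

Lemma alpha_mul_card (G : {group gT}) :
  (alpha G n * #|G| = \sum_(g in G) #|'C_G[g]| ^ n)%N.
Proof.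
rewrite /alpha -(Frobenius_Cauchy (acts_conj_tuple G)).
by apply: eq_bigr => g _; rewrite card_fix_conj_tuple.
Qed.

End SimultaneousConjugation.

Section Centralizers.
Local Open Scope group_scope.
Variable gT : finGroupType.
Implicit Types G M : {group gT}.

Lemma subcent1_eq_center G g : g \in G -> ('C_G[g] == G) = (g \in 'Z(G)).
Proof.
by move=> Gg; rewrite eqEsubset subsetIl subsetI subxx sub_cent1 inE Gg.
Qed.

Lemma subcent1_center G g : g \in 'Z(G) -> 'C_G[g] = G.
Proof. by move=> Zg; apply/eqP; rewrite subcent1_eq_center ?(subsetP (center_sub G)). Qed.

Lemma subcent1_proper G g : g \in G :\: 'Z(G) -> 'C_G[g] \proper G.
Proof.
by case/setDP=> Gg notZg; rewrite properEneq subsetIl subcent1_eq_center ?notZg.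
Qed.

Lemma center_proper_center_subcent1 G g :
  g \in G :\: 'Z(G) -> 'Z(G) \proper 'Z('C_G[g]).
Proof.
case/setDP=> Gg notZg; apply/properP; split; last first.
  exists g => //; apply/centerP; split; first exact: subcent1_id.
  by move=> y /subcent1P[_ /commute_sym].
apply/subsetP => z /centerP[Gz cz]; apply/centerP; split.
  by apply/subcent1P; split; last exact/commute_sym/cz.
by move=> y /setIP[Gy _]; exact: cz.
Qed.

Lemma subcent1_maximal_abelian_center G M g :
  maximal M G -> abelian M -> g \in G :\: M -> M :&: 'C_G[g] \subset 'Z(G).
Proof.
move=> maxM abM /setDP[Gg notMg]; have sMG := proper_sub (maxgroupp maxM).
apply/subsetP => x /setIP[Mx /subcent1P[_ cgx]].
rewrite -subcent1_eq_center ?(subsetP sMG) //.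
have sMCx : M \subset 'C_G[x] by rewrite subsetI sMG sub_cent1 (subsetP abM).
apply: contraR notMg => nCxG.
have properCx : 'C_G[x] \proper G by rewrite properEneq nCxG subsetIl.
rewrite -((maxgroupP maxM).2 _ properCx sMCx).
by apply/subcent1P; split; last exact: commute_sym.
Qed.

End Centralizers.

Lemma indexg_pfactor (gT : finGroupType) (p a b : nat) (H K : {group gT}) :
  (1 < p)%N -> (H \subset K)%g -> #|H| = (p ^ a)%N -> #|K| = (p ^ b)%N ->
  #|K : H|%g = (p ^ (b - a))%N.
Proof.
move=> p_gt1 sHK oH oK; have := Lagrange sHK.
have le_ab : (a <= b)%N by rewrite -(leq_exp2l _ _ p_gt1) -oH -oK subset_leq_card.
rewrite oH oK -{1}(subnKC le_ab) expnD => /eqP.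
by rewrite eqn_pmul2l ?expn_gt0 ?(ltnW p_gt1) // => /eqP.
Qed.

Lemma sum_nat_const_in (I : finType) (A : {pred I}) (F : I -> nat) c :
  {in A, forall i, F i = c} -> (\sum_(i in A) F i = #|A| * c)%N.
Proof. by move=> FA; rewrite -sum_nat_const; apply: eq_bigr. Qed.

Section CentralQuotientOfOrderP3.
Local Open Scope group_scope.
Variables (p m : nat) (gT : finGroupType) (G : {group gT}).
Hypotheses (p_pr : prime p) (pG : p.-group G) (oG : #|G| = (p ^ m)%N)
  (oGZ : #|G / 'Z(G)| = (p ^ 3)%N).

Let p_gt1 : 1 < p. Proof. exact: prime_gt1. Qed.

Lemma card_subgroup_pfactor (H : {group gT}) :
  H \subset G -> exists2 k, k <= m & #|H| = (p ^ k)%N.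
Proof. by move=> sHG; apply/(dvdn_pfactor _ _ p_pr); rewrite -oG cardSg. Qed.

Lemma card_center_pfactor : 3 <= m /\ #|'Z(G)| = (p ^ (m - 3))%N.
Proof.
have [k _ oZ] := @card_subgroup_pfactor 'Z(G)%G (center_sub G).
move: oGZ; rewrite card_quotient ?normal_norm ?center_normal //.
rewrite (indexg_pfactor p_gt1 (center_sub G) oZ oG) => /eqP.
by rewrite eqn_exp2l // oZ => /eqP m_k; split; [lia | congr (_ ^ _)%N; lia].
Qed.

Lemma card_subcent1_noncentral g : g \in G :\: 'Z(G) ->
  #|'C_G[g]| = (p ^ (m - 2))%N \/ #|'C_G[g]| = (p ^ (m - 1))%N.
Proof.
move=> notZg; have [le3m oZ] := card_center_pfactor.
have ltZC := proper_card (proper_sub_trans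
  (center_proper_center_subcent1 notZg) (center_sub _)).
have ltCG := proper_card (subcent1_proper notZg).
have [k _ /= oC] := @card_subgroup_pfactor 'C_G[g]%G (subsetIl _ _).
move: ltZC ltCG; rewrite oC oZ oG !ltn_exp2l // => ltZC ltCG.
have [->|->] : k = m - 2 \/ k = m - 1 by lia.
  by left.
by right.
Qed.

Lemma maximal_abelian_subcent1 g : g \in G :\: 'Z(G) ->
  #|'C_G[g]| = (p ^ (m - 1))%N -> maximal 'C_G[g] G && abelian 'C_G[g].
Proof.
move=> notZg oC; have [le3m oZ] := card_center_pfactor.
apply/andP; split.
  apply: p_index_maximal; first exact: subsetIl.
  rewrite (indexg_pfactor p_gt1 (subsetIl _ _) oC oG).
  by have -> : m - (m - 1) = 1%N by lia.
have ltZZC := proper_card (center_proper_center_subcent1 notZg).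
have [j _ oZC] := @card_subgroup_pfactor 'Z('C_G[g])%G
  (subset_trans (center_sub _) (subsetIl _ _)).
apply/cyclic_center_factor_abelian/(dvdn_prime_cyclic p_pr).
rewrite card_quotient ?normal_norm ?center_normal //.
rewrite (indexg_pfactor p_gt1 (center_sub _) oZC oC) -{2}(expn1 p) dvdn_Pexp2l //.
by move: ltZZC; rewrite oZC oZ ltn_exp2l //; lia.
Qed.

Lemma alpha_mul_card_no_abelian_maximal n :
    ~~ [exists M : {group gT}, maximal M G && abelian M] ->
  (alpha G n * p ^ m
    = p ^ (m - 3) * (p ^ m) ^ n + (p ^ m - p ^ (m - 3)) * (p ^ (m - 2)) ^ n)%N.
Proof.
move=> noMab; have [_ oZ] := card_center_pfactor.
rewrite -{1}oG alpha_mul_card (big_setID 'Z(G)) /= (setIidPr (center_sub G)).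
rewrite (@sum_nat_const_in _ _ _ ((p ^ m) ^ n)) => [|g Zg]; last first.
  by rewrite subcent1_center ?oG.
rewrite (@sum_nat_const_in _ _ _ ((p ^ (m - 2)) ^ n)) => [|g notZg].
  by rewrite cardsDS ?center_sub ?oG ?oZ.
have [-> // | oC] := card_subcent1_noncentral notZg.
by case/negP: noMab; apply/existsP; exists 'C_G[g]%G; apply: maximal_abelian_subcent1.
Qed.

Variable M : {group gT}.
Hypotheses (maxM : maximal M G) (abM : abelian M).

Let sMG : M \subset G. Proof. exact: proper_sub (maxgroupp maxM). Qed.

Lemma card_maximal_pfactor : #|M| = (p ^ (m - 1))%N.
Proof.
have [k _ oM] := card_subgroup_pfactor sMG.
move: (p_maximal_index pG maxM).
rewrite (indexg_pfactor p_gt1 sMG oM oG) -{2}(expn1 p) => /eqP.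
by rewrite eqn_exp2l // oM => /eqP mk1; congr (_ ^ _)%N; lia.
Qed.

Lemma card_subcent1_outside_maximal_le g :
  g \in G :\: M -> #|'C_G[g]| <= (p ^ (m - 2))%N.
Proof.
move=> notMg; have [le3m oZ] := card_center_pfactor.
have [k _ /= oC] := @card_subgroup_pfactor 'C_G[g]%G (subsetIl _ _).
have le_MC_G : #|M * 'C_G[g]| <= #|G| by rewrite subset_leq_card ?mul_subG ?subsetIl.
have le_MiC_Z : #|M :&: 'C_G[g]| <= #|'Z(G)|.
  exact/subset_leq_card/(subcent1_maximal_abelian_center maxM abM notMg).
have := leq_mul le_MC_G le_MiC_Z.
rewrite -mul_cardG card_maximal_pfactor oC oG oZ -!expnD leq_exp2l // => le_k.
by rewrite leq_exp2l //; lia.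
Qed.

Lemma center_sub_abelian_maximal : 'Z(G) \subset M.
Proof.
have [le3m _] := card_center_pfactor.
apply/subsetP => z Zz; apply/negPn/negP => notMz.
have /card_subcent1_outside_maximal_le : z \in G :\: M.
  by rewrite inE notMz (subsetP (center_sub G)).
by rewrite subcent1_center // oG leq_exp2l //; lia.
Qed.

Lemma subcent1_abelian_maximal g : g \in M :\: 'Z(G) -> 'C_G[g] = M.
Proof.
case/setDP=> Mg notZg; have Gg := subsetP sMG g Mg.
apply: (maxgroupP maxM).2; first by apply: subcent1_proper; rewrite inE notZg.
by rewrite subsetI sMG sub_cent1 (subsetP abM).
Qed.

Lemma card_subcent1_outside_maximal g :
  g \in G :\: M -> #|'C_G[g]| = (p ^ (m - 2))%N.
Proof.
move=> notMg; have [le3m _] := card_center_pfactor.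
have notZg : g \in G :\: 'Z(G).
  case/setDP: notMg => Gg; rewrite inE Gg andbT; apply: contra.
  exact: (subsetP center_sub_abelian_maximal).
have := card_subcent1_outside_maximal_le notMg.
have [-> // | ->] := card_subcent1_noncentral notZg.
by rewrite leq_exp2l //; lia.
Qed.

Lemma alpha_mul_card_abelian_maximal n :
  (alpha G n * p ^ m
    = p ^ (m - 3) * (p ^ m) ^ n
      + (p ^ (m - 1) - p ^ (m - 3)) * (p ^ (m - 1)) ^ n
      + (p ^ m - p ^ (m - 1)) * (p ^ (m - 2)) ^ n)%N.
Proof.
have [_ oZ] := card_center_pfactor; have sZM := center_sub_abelian_maximal.
rewrite -{1}oG alpha_mul_card (big_setID M) /= (setIidPr sMG).
rewrite (big_setID 'Z(G)) /= (setIidPr sZM).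
rewrite (@sum_nat_const_in _ _ _ ((p ^ m) ^ n)) => [|g Zg]; last first.
  by rewrite subcent1_center ?oG.
rewrite (@sum_nat_const_in _ _ _ ((p ^ (m - 1)) ^ n)) => [|g notZg]; last first.
  by rewrite subcent1_abelian_maximal ?card_maximal_pfactor.
rewrite (@sum_nat_const_in _ _ _ ((p ^ (m - 2)) ^ n)) => [|g notMg]; last first.
  by rewrite card_subcent1_outside_maximal.
by rewrite !cardsDS // oG oZ card_maximal_pfactor.
Qed.

End CentralQuotientOfOrderP3.

Local Open Scope ring_scope.

Lemma natr_eq_invn_mul (R : numFieldType) (a d s : nat) :
  (a * d = s)%N -> (0 < d)%N -> a%:R = d%:R^-1 * s%:R :> R.
Proof. by move=> <- d_gt0; rewrite natrM [a%:R * _]mulrC mulKf // pnatr_eq0 -lt0n. Qed.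

Theorem theorem7p3 (p m : nat) (gT : finGroupType) (G : {group gT}) :
  prime p -> (p.-group G)%g -> #|G| = (p ^ m)%N ->
  #|(G / 'Z(G))%g| = (p ^ 3)%N ->
  ((~~ [exists M : {group gT}, maximal M G && abelian M]) ->
    forall n : nat,
      (alpha G n)%:R =
        ((p%:R : rat) ^+ m)^-1 *
        ((p%:R : rat) ^+ (m - 3) * ((p%:R : rat) ^+ m) ^+ n
         + ((p%:R : rat) ^+ m - (p%:R : rat) ^+ (m - 3))
           * ((p%:R : rat) ^+ (m - 2)) ^+ n))
  /\
  ([exists M : {group gT}, maximal M G && abelian M] ->
    forall n : nat,
      (alpha G n)%:R =
        ((p%:R : rat) ^+ m)^-1 *
        ((p%:R : rat) ^+ (m - 3) * ((p%:R : rat) ^+ m) ^+ n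
         + ((p%:R : rat) ^+ (m - 1) - (p%:R : rat) ^+ (m - 3))
           * ((p%:R : rat) ^+ (m - 1)) ^+ n
         + ((p%:R : rat) ^+ m - (p%:R : rat) ^+ (m - 1))
           * ((p%:R : rat) ^+ (m - 2)) ^+ n)).
Proof.
move=> p_pr pG oG oGZ; have p_gt0 := prime_gt0 p_pr.
split=> [noMab | /existsP[M /andP[maxM abM]]] n.
  rewrite (natr_eq_invn_mul _ (alpha_mul_card_no_abelian_maximal p_pr pG oG oGZ n noMab)).
    by rewrite natrX natrD !natrM natrB ?leq_pexp2l ?leq_subr // !natrX.
  by rewrite expn_gt0 p_gt0.
rewrite (natr_eq_invn_mul _ (alpha_mul_card_abelian_maximal p_pr pG oG oGZ maxM abM n)).
  by rewrite natrX !natrD !natrM !natrB ?leq_pexp2l ?leq_sub2l ?leq_subr // !natrX.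
by rewrite expn_gt0 p_gt0.
Qed.
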